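(* Let $t>0$ and $\kappa\in(-1,1)$, and put $\epsilon:=\kappa^2$. The map $\phi_{\kappa,t}$ satisfies $\phi_{\kappa,t}(1)=0$ and $\partial_z\phi_{\kappa,t}(1)\neq 0$, so it is locally invertible near $z=1$, with local inverse $\phi_{\kappa,t}^{-1}(u)=1+\sum_{n\ge1}a_n(\kappa,t)u^n$ near $u=0$. For every $n\geq 1$, $$a_n(\kappa,t)=\frac{2}{2^{2n}n}\sum_{k=1}^{n}\binom{2n}{n-k}e^{-kt}\left\{\sum_{m=0}^{k-1}L_{k-m-1}^{(m+1)}(2kt)\,2^{m}\,P_n^{(m)}(\epsilon)\right\}.$$
   Context: Pochhammer symbol: $(a)_0=1$, $(a)_k=a(a+1)\cdots(a+k-1)$ for $k\geq1$ (so $(0)_k=\delta_{k0}$). Laguerre polynomials: for $n\ge0$ and $a\in\mathbb{R}$, $L_n^{(a)}(x):=\frac{1}{n!}\sum_{j=0}^n\frac{(-n)_j}{j!}(a+j+1)_{n-j}x^j$. Let $\alpha(z):=\frac{1-\sqrt{1-z}}{1+\sqrt{1-z}}$ (principal branch), a bijection of $\mathbb{C}\setminus[1,\infty)$ onto the open unit disc $\mathbb{D}$ with inverse $\alpha^{-1}(z)=\frac{4z}{(1+z)^2}$. For $t>0$ let $\xi_{2t}(z):=\frac{z-1}{z+1}e^{tz}$. Define $\phi_{\kappa,t}(z):=\frac{z^2}{z^2-\kappa^2}\,\alpha^{-1}(\xi_{2t}(z))$ near $z=1$, and (Lagrange inversion coefficients) $a_n(\kappa,t):=\frac{1}{n!}\partial_z^{n-1}\left[\frac{z-1}{\phi_{\kappa,t}(z)}\right]^n\Big|_{z=1}$,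 $n\ge1$. For integers $n\geq1$, $m\geq0$, define the polynomial $P_n^{(m)}(\epsilon):=\frac{(-1)^m}{m!}\sum_{k=0}^n\binom{n}{k}(-\epsilon)^k(2k)_m$. *)

From Stdlib Require Import Reals Arith Factorial Binomial.
Open Scope R_scope.

Fixpoint sumR (n : nat) (f : nat -> R) : R :=
  match n with O => 0 | S k => sumR k f + f k end.

Fixpoint poch (a : R) (k : nat) : R :=
  match k with O => 1 | S j => poch a j * (a + INR j) end.

Definition laguerre (n : nat) (a x : R) : R :=
  / INR (fact n) *
  sumR (S n) (fun j => poch (- INR n) j / INR (fact j)
                       * poch (a + INR j + 1) (n - j) * x ^ j).

Definition alpha_inv (w : R) : R := 4 * w / (1 + w) ^ 2.

Definition xi2 (t z : R) : R := (z - 1) / (z + 1) * exp (t * z).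

Definition phi (kappa t z : R) : R :=
  z ^ 2 / (z ^ 2 - kappa ^ 2) * alpha_inv (xi2 t z).

(* Explicit form of (z-1)/phi_{kappa,t}(z), i.e. its continuous extension
   across the removable singularity z = 1. *)
Definition Gfun (kappa t z : R) : R :=
  (z ^ 2 - kappa ^ 2) / z ^ 2 * (z + 1) * exp (- (t * z))
  * (1 + xi2 t z) ^ 2 / 4.

Fixpoint is_Dn (n : nat) (a b : R) (f g : R -> R) : Prop :=
  match n with
  | O => forall x, a < x < b -> f x = g x
  | S k => exists f' : R -> R,
      (forall x, a < x < b -> derivable_pt_lim f x (f' x)) /\ is_Dn k a b f' g
  end.

Definition Pnm (n m : nat) (eps : R) : R :=
  (-1) ^ m / INR (fact m) *
  sumR (S n) (fun k => C n k * (- eps) ^ k * poch (2 * INR k) m).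

Definition an_formula (n : nat) (kappa t : R) : R :=
  2 / (2 ^ (2 * n) * INR n) *
  sumR n (fun i => let k := S i in
    C (2 * n) (n - k) * exp (- (INR k * t)) *
    sumR k (fun m =>
      laguerre (k - m - 1) (INR m + 1) (2 * INR k * t) * 2 ^ m
      * Pnm n m (kappa ^ 2))).

(* Near z = 1 one has (z - 1) / phi(z) = G(z) with
     G(z) = (1 - eps / z^2) (A + B)^2 / (4 (z + 1)),
     A = (z + 1) e^(-tz/2),   B = (z - 1) e^(tz/2),
   and a_n is the Taylor coefficient of order n - 1 of G^n at 1.  Expanding
   (A + B)^(2n) binomially, the term A^j B^(2n-j) carries the factor (z - 1)^(2n-j),
   so only j = n + k with 1 <= k <= n reaches order n - 1, and for those terms
   (z + 1)^(-n) cancels against A^j, leaving (1 - eps/z^2)^n (z + 1)^k e^(-ktz).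
   The Taylor coefficients of (1 - eps/z^2)^n at 1 are the P_n^(m)(eps), and the
   coefficient of order k - m - 1 of (z + 1)^k e^(-ktz) is
   e^(-kt) 2^(m+1) L_(k-m-1)^(m+1)(2kt).  Taylor coefficients are handled through
   jets (finitely many derivatives on an interval, recorded by their values at the
   centre), which add and multiply by the Leibniz rule. *)

From Stdlib Require Import Reals Arith Factorial Binomial Lia Lra.
From Coquelicot Require Import Hierarchy Derive AutoDerive.
Open Scope R_scope.

(** * Finite sums and binomial coefficients *)

Lemma sumR_ext n f g : (forall j, (j < n)%nat -> f j = g j) -> sumR n f = sumR n g.
Proof.
  induction n as [|n IH]; intros Hfg; simpl; [reflexivity|].
  rewrite IH by (intros; apply Hfg; lia); rewrite Hfg by lia; reflexivity.
Qed.

Lemma sumR_plus n f g : sumR n (fun j => f j + g j) = sumR n f + sumR n g.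
Proof. induction n as [|n IH]; simpl; [ring | rewrite IH; ring]. Qed.

Lemma sumR_mult_l n K f : sumR n (fun j => K * f j) = K * sumR n f.
Proof. induction n as [|n IH]; simpl; [ring | rewrite IH; ring]. Qed.

Lemma sumR_mult_r n K f : sumR n (fun j => f j * K) = sumR n f * K.
Proof. induction n as [|n IH]; simpl; [ring | rewrite IH; ring]. Qed.

Lemma sumR_eq0 n f : (forall j, (j < n)%nat -> f j = 0) -> sumR n f = 0.
Proof.
  induction n as [|n IH]; intros Hf; simpl; [reflexivity|].
  rewrite IH by (intros; apply Hf; lia); rewrite Hf by lia; ring.
Qed.

Lemma sumR_succ_l n f : sumR (S n) f = f O + sumR n (fun j => f (S j)).
Proof. induction n as [|n IH]; simpl in *; [ring | rewrite IH; ring]. Qed.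

Lemma sumR_add_range m n f :
  sumR (m + n) f = sumR m f + sumR n (fun j => f (m + j)%nat).
Proof.
  induction n as [|n IH]; simpl; [rewrite Nat.add_0_r; ring|].
  rewrite Nat.add_succ_r; simpl; rewrite IH; ring.
Qed.

Lemma sumR_rev n f : sumR (S n) f = sumR (S n) (fun j => f (n - j)%nat).
Proof.
  induction n as [|n IH]; [reflexivity|].
  rewrite (sumR_succ_l (S n) (fun j => f (S n - j)%nat)), Nat.sub_0_r.
  simpl (S n - S _)%nat; rewrite <- IH; simpl; ring.
Qed.

Lemma sum_f_R0_sumR f n : sum_f_R0 f n = sumR (S n) f.
Proof. induction n as [|n IH]; simpl; [ring | rewrite IH; reflexivity]. Qed.

(* Stdlib's [C n k] truncates [n - k], so it does not vanish for [k > n]. *)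
Definition binR (n k : nat) : R := if (k <=? n)%nat then C n k else 0.

Lemma binR_gt n k : (n < k)%nat -> binR n k = 0.
Proof. intros H; unfold binR; destruct (Nat.leb_spec k n); [lia | reflexivity]. Qed.

Lemma binR_0_r n : binR n 0 = 1.
Proof.
  unfold binR, C; simpl; rewrite Nat.sub_0_r; simpl.
  field; apply INR_fact_neq_0.
Qed.

Lemma binR_pascal i j : binR (S i) (S j) = binR i j + binR i (S j).
Proof.
  unfold binR; destruct (Nat.leb_spec (S j) (S i)), (Nat.leb_spec j i),
    (Nat.leb_spec (S j) i); try lia.
  - rewrite <- pascal by lia; reflexivity.
  - assert (j = i) by lia; subst; unfold C; rewrite !Nat.sub_diag.
    field; repeat split; apply INR_fact_neq_0.
  - ring.
Qed.

Lemma binR_fact i j : (j <= i)%nat ->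
  binR i j * INR (fact j) * INR (fact (i - j)) = INR (fact i).
Proof.
  intros H; unfold binR, C; destruct (Nat.leb_spec j i); [|lia].
  field; split; apply INR_fact_neq_0.
Qed.

Lemma sumR_binR_succ i F :
  sumR (S (S i)) (fun j => binR (S i) j * F j) =
  sumR (S i) (fun j => binR i j * (F j + F (S j))).
Proof.
  rewrite sumR_succ_l, binR_0_r.
  rewrite (sumR_ext _ _ (fun j => binR i j * F (S j) + binR i (S j) * F (S j)))
    by (intros; rewrite binR_pascal; ring).
  rewrite (sumR_ext _ (fun j => binR i j * (F j + F (S j)))
             (fun j => binR i j * F j + binR i j * F (S j))) by (intros; ring).
  rewrite !sumR_plus, (sumR_succ_l i (fun j => binR i j * F j)), binR_0_r.
  simpl (sumR (S i) (fun j => binR i (S j) * F (S j))).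
  rewrite binR_gt by lia; ring.
Qed.
Fixpoint falling (k p : nat) : R :=
  match p with O => 1 | S q => falling k q * INR (k - q) end.

Lemma falling_fact k p : (p <= k)%nat -> falling k p * INR (fact (k - p)) = INR (fact k).
Proof.
  induction p as [|p IH]; intros H; simpl; [rewrite Nat.sub_0_r; ring|].
  rewrite <- IH by lia; replace (k - p)%nat with (S (k - S p)) by lia.
  rewrite fact_simpl, mult_INR; ring.
Qed.

Lemma falling_gt k p : (k < p)%nat -> falling k p = 0.
Proof.
  induction p as [|p IH]; intros H; [lia|]; simpl.
  destruct (Nat.eq_dec k p) as [->|]; [rewrite Nat.sub_diag; simpl; ring|].
  rewrite IH by lia; ring.
Qed.

Lemma poch_opp_INR r j : (j <= r)%nat ->
  poch (- INR r) j * INR (fact (r - j)) = (-1) ^ j * INR (fact r).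
Proof.
  induction j as [|j IH]; intros H; simpl; [rewrite Nat.sub_0_r; ring|].
  replace (r - j)%nat with (S (r - S j)) in IH by lia.
  rewrite fact_simpl, mult_INR, S_INR, minus_INR in IH by lia.
  rewrite S_INR in IH.
  transitivity (-1 * ((-1) ^ j * INR (fact r))); [rewrite <- IH by lia|]; ring.
Qed.

Lemma poch_INR_succ q p : poch (INR q + 1) p * INR (fact q) = INR (fact (q + p)).
Proof.
  induction p as [|p IH]; simpl; [rewrite Nat.add_0_r; ring|].
  rewrite Nat.add_succ_r, fact_simpl, mult_INR, <- IH, S_INR, plus_INR; ring.
Qed.

Definition cauchy (a b : nat -> R) (i : nat) : R :=
  sumR (S i) (fun j => a j * b (i - j)%nat).

Definition delta (p i : nat) : R := if (i =? p)%nat then 1 else 0.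

Lemma cauchy_delta_l p g i :
  cauchy (delta p) g i = if (p <=? i)%nat then g (i - p)%nat else 0.
Proof.
  unfold cauchy; destruct (Nat.leb_spec p i).
  - replace (S i) with (p + S (i - p))%nat by lia.
    rewrite sumR_add_range, sumR_succ_l, !sumR_eq0; unfold delta.
    + rewrite Nat.add_0_r, Nat.eqb_refl; ring.
    + intros j _; destruct (Nat.eqb_spec (p + S j) p); [lia | ring].
    + intros j Hj; destruct (Nat.eqb_spec j p); [lia | ring].
  - apply sumR_eq0; intros j Hj; unfold delta.
    destruct (Nat.eqb_spec j p); [lia | ring].
Qed.

Lemma derivable_pt_lim_sumR m (F F' : nat -> R -> R) x :
  (forall j, (j < m)%nat -> derivable_pt_lim (F j) x (F' j x)) ->
  derivable_pt_lim (fun y => sumR m (fun j => F j y)) x (sumR m (fun j => F' j x)).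
Proof.
  induction m as [|m IH]; intros H; simpl; [apply derivable_pt_lim_const|].
  apply (derivable_pt_lim_plus (fun y => sumR m (fun j => F j y)) (F m)); auto.
Qed.

Lemma derivable_pt_lim_interval (f g : R -> R) a b x l :
  (forall y, a < y < b -> f y = g y) -> a < x < b ->
  derivable_pt_lim f x l -> derivable_pt_lim g x l.
Proof.
  intros Hfg Hx Hf; apply is_derive_Reals; apply is_derive_Reals in Hf.
  apply (is_derive_ext_loc f g); [|exact Hf].
  assert (Hd : 0 < Rmin (x - a) (b - x)) by (apply Rmin_pos; lra).
  exists (mkposreal _ Hd); intros y Hy; apply Hfg.
  cbn in Hy; unfold AbsRing_ball, abs, minus, plus, opp in Hy; cbn in Hy.
  apply Rabs_def2 in Hy.
  generalize (Rmin_l (x - a) (b - x)) (Rmin_r (x - a) (b - x)); lra.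
Qed.

(** * Jets *)

Section Jets.

Variables a b x0 : R.

Definition jet (N : nat) (f : R -> R) (c : nat -> R) : Prop :=
  exists D : nat -> R -> R,
    (forall x, a < x < b -> D O x = f x) /\
    (forall i x, (i < N)%nat -> a < x < b -> derivable_pt_lim (D i) x (D (S i) x)) /\
    (forall i, (i <= N)%nat -> D i x0 = INR (fact i) * c i).

Lemma jet_ext N f g c : (forall x, a < x < b -> f x = g x) -> jet N f c -> jet N g c.
Proof.
  intros Hfg (D & H0 & H1 & H2); exists D; split; [|auto].
  intros x Hx; rewrite H0; auto.
Qed.

Lemma jet_coef_ext N f c c' :
  (forall i, (i <= N)%nat -> c i = c' i) -> jet N f c -> jet N f c'.
Proof.
  intros Hc (D & H0 & H1 & H2); exists D; repeat split; auto.
  intros i Hi; rewrite H2, Hc; auto.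
Qed.

Lemma jet_scal N K f c : jet N f c -> jet N (fun x => K * f x) (fun i => K * c i).
Proof.
  intros (D & H0 & H1 & H2); exists (fun i x => K * D i x); repeat split.
  - intros x Hx; rewrite H0; auto.
  - intros i x Hi Hx; apply derivable_pt_lim_scal; auto.
  - intros i Hi; rewrite H2; auto; ring.
Qed.

Lemma jet_plus N f g c e :
  jet N f c -> jet N g e -> jet N (fun x => f x + g x) (fun i => c i + e i).
Proof.
  intros (D & H0 & H1 & H2) (E & G0 & G1 & G2).
  exists (fun i x => D i x + E i x); repeat split.
  - intros x Hx; rewrite H0, G0; auto.
  - intros i x Hi Hx; apply (derivable_pt_lim_plus (D i) (E i)); auto.
  - intros i Hi; rewrite H2, G2; auto; ring.
Qed.

Lemma jet_sumR N m (F : nat -> R -> R) (c : nat -> nat -> R) :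
  (forall j, (j < m)%nat -> jet N (F j) (c j)) ->
  jet N (fun x => sumR m (fun j => F j x)) (fun i => sumR m (fun j => c j i)).
Proof.
  induction m as [|m IH]; intros H; simpl.
  - exists (fun _ _ => 0); repeat split; intros; [apply derivable_pt_lim_const | ring].
  - apply jet_plus; auto.
Qed.

(* Leibniz rule: the [i]-th derivative of [f g] is [sum_j binR i j D_j E_(i-j)]. *)
Lemma jet_mult N f g c e : jet N f c -> jet N g e -> jet N (fun x => f x * g x) (cauchy c e).
Proof.
  intros (D & H0 & H1 & H2) (E & G0 & G1 & G2).
  exists (fun i x => sumR (S i) (fun j => binR i j * D j x * E (i - j)%nat x)); repeat split.
  - intros x Hx; simpl; rewrite binR_0_r, H0, G0; auto; ring.
  - intros i x Hi Hx.
    replace (sumR (S (S i)) (fun j => binR (S i) j * D j x * E (S i - j)%nat x)) with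
      (sumR (S i) (fun j => binR i j *
                            (D (S j) x * E (i - j)%nat x + D j x * E (S (i - j)) x))).
    + apply (derivable_pt_lim_sumR (S i) (fun j y => binR i j * D j y * E (i - j)%nat y)
        (fun j y => binR i j * (D (S j) y * E (i - j)%nat y + D j y * E (S (i - j)) y))).
      intros j Hj; rewrite Rmult_plus_distr_l, <- !Rmult_assoc.
      apply derivable_pt_lim_mult with (f1 := fun y => binR i j * D j y);
        [apply derivable_pt_lim_scal, H1 | apply G1]; auto; lia.
    + rewrite (sumR_ext (S (S i)) _ (fun j => binR (S i) j * (D j x * E (S i - j)%nat x)))
        by (intros; ring).
      rewrite sumR_binR_succ; apply sumR_ext; intros j Hj.
      replace (S i - S j)%nat with (i - j)%nat by lia.
      replace (S i - j)%nat with (S (i - j)) by lia; ring.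
  - intros i Hi; unfold cauchy; rewrite <- sumR_mult_l; apply sumR_ext; intros j Hj.
    rewrite H2, G2 by lia; rewrite <- (binR_fact i j) by lia; ring.
Qed.

Definition exp_coef (r : R) (i : nat) : R := r ^ i * exp (r * x0) / INR (fact i).

Lemma jet_exp N r : jet N (fun x => exp (r * x)) (exp_coef r).
Proof.
  exists (fun i x => r ^ i * exp (r * x)); repeat split.
  - intros; simpl; ring.
  - intros i x _ _; apply is_derive_Reals; auto_derive; [exact I | simpl; ring].
  - intros i _; unfold exp_coef; field; apply INR_fact_neq_0.
Qed.

Definition pow_coef (c : R) (p i : nat) : R :=
  falling p i * (x0 + c) ^ (p - i) / INR (fact i).

Lemma jet_pow N c p : jet N (fun x => (x + c) ^ p) (pow_coef c p).
Proof.
  exists (fun i x => falling p i * (x + c) ^ (p - i)); repeat split.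
  - intros; simpl; rewrite Nat.sub_0_r; ring.
  - intros i x _ _; apply is_derive_Reals; auto_derive; [exact I|]; simpl.
    replace (p - S i)%nat with (pred (p - i)) by lia; ring.
  - intros i _; unfold pow_coef; field; apply INR_fact_neq_0.
Qed.

Lemma jet_pow_centered N p : jet N (fun x => (x - x0) ^ p) (delta p).
Proof.
  apply (jet_coef_ext N _ (pow_coef (- x0) p)); [|apply jet_pow].
  intros i _; unfold pow_coef, delta; replace (x0 + - x0) with 0 by ring.
  destruct (Nat.eqb_spec i p) as [->|Hip].
  - rewrite Nat.sub_diag; generalize (falling_fact p p (le_n p)).
    rewrite Nat.sub_diag; simpl; intros ->; field; apply INR_fact_neq_0.
  - destruct (Nat.lt_ge_cases p i).
    + rewrite falling_gt by lia; unfold Rdiv; ring.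
    + replace (p - i)%nat with (S (p - i - 1)) by lia; simpl; unfold Rdiv; ring.
Qed.

Definition inv_pow_coef (c : R) (p i : nat) : R :=
  (-1) ^ i * poch (INR p) i * (/ (x0 + c)) ^ (p + i) / INR (fact i).

Lemma jet_inv_pow N c p : (forall x, a < x < b -> x + c <> 0) ->
  jet N (fun x => (/ (x + c)) ^ p) (inv_pow_coef c p).
Proof.
  intros Hc; exists (fun i x => (-1) ^ i * poch (INR p) i * (/ (x + c)) ^ (p + i)).
  repeat split.
  - intros; simpl; rewrite Nat.add_0_r; ring.
  - intros i x _ Hx; apply is_derive_Reals; auto_derive; [exact (Hc x Hx)|].
    rewrite Nat.add_succ_r; simpl; rewrite <- plus_INR.
    destruct (p + i)%nat as [|q]; [simpl; ring|].
    rewrite S_INR; simpl pred; simpl pow; field; exact (Hc x Hx).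
  - intros i _; unfold inv_pow_coef; field; apply INR_fact_neq_0.
Qed.

Lemma jet_is_Dn N f c : jet N f c -> exists h, is_Dn N a b f h /\ h x0 = INR (fact N) * c N.
Proof.
  intros (D & H0 & H1 & H2); exists (D N); split; [|apply H2; lia].
  assert (Hchain : forall k i, (i + k <= N)%nat -> is_Dn k a b (D i) (D (i + k)%nat)).
  { induction k as [|k IH]; intros i Hi; simpl.
    - intros x _; rewrite Nat.add_0_r; reflexivity.
    - exists (D (S i)); split; [intros x Hx; apply H1; [lia | exact Hx]|].
      rewrite <- Nat.add_succ_comm; apply IH; lia. }
  destruct N as [|N]; simpl.
  - intros x Hx; symmetry; apply H0, Hx.
  - exists (D 1%nat); split; [|apply (Hchain N 1%nat); lia].
    intros x Hx; apply (derivable_pt_lim_interval (D O) f a b); auto.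
    apply H1; [lia | exact Hx].
Qed.

End Jets.

Notation jet1 := (jet (1 - / 2) (1 + / 2) 1).

Lemma jet1_Pnm N n eps : jet1 N (fun x => (1 - eps * (/ x) ^ 2) ^ n) (fun m => Pnm n m eps).
Proof.
  apply (jet_coef_ext _ _ _ N _
    (fun m => sumR (S n) (fun l => C n l * (- eps) ^ l * inv_pow_coef 1 0 (2 * l) m))).
  { intros m _; unfold Pnm, inv_pow_coef.
    rewrite Rdiv_def, Rmult_assoc, <- !sumR_mult_l; apply sumR_ext; intros l _.
    rewrite Rplus_0_r, Rinv_1, pow1, mult_INR; simpl (INR 2).
    replace (1 + 1) with 2 by ring; unfold Rdiv; ring. }
  apply (jet_ext _ _ _ N
    (fun x => sumR (S n) (fun l => C n l * (- eps) ^ l * (/ (x + 0)) ^ (2 * l)))).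
  { intros x _; rewrite <- sum_f_R0_sumR.
    replace (1 - eps * (/ x) ^ 2) with (- eps * (/ x) ^ 2 + 1) by ring.
    rewrite binomial; apply sum_eq; intros i _.
    rewrite pow1, Rmult_1_r, Rpow_mult_distr, <- pow_mult, Rplus_0_r; ring. }
  apply jet_sumR; intros l _; apply jet_scal, jet_inv_pow; intros x Hx; lra.
Qed.

Lemma cauchy_pow_exp_laguerre r m c :
  cauchy (pow_coef 1 1 (r + m + 1)) (exp_coef 1 c) r
  = exp c * 2 ^ (m + 1) * laguerre r (INR m + 1) (- (2 * c)).
Proof.
  unfold cauchy, laguerre, pow_coef, exp_coef; rewrite Rmult_1_r, sumR_rev.
  rewrite <- Rmult_assoc, <- sumR_mult_l; apply sumR_ext; intros j Hj.
  set (k := (r + m + 1)%nat); set (q := (m + 1 + j)%nat).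
  replace (k - (r - j))%nat with q by (unfold k, q; lia).
  replace (r - (r - j))%nat with j by lia.
  assert (Hfalling : falling k (r - j) = INR (fact k) / INR (fact q)).
  { rewrite <- (falling_fact k (r - j)) by (unfold k; lia).
    replace (k - (r - j))%nat with q by (unfold k, q; lia).
    field; apply INR_fact_neq_0. }
  assert (Hpoch : poch (INR m + 1 + INR j + 1) (r - j) = INR (fact k) / INR (fact q)).
  { replace (INR m + 1 + INR j + 1) with (INR q + 1)
      by (unfold q; rewrite !plus_INR; simpl; ring).
    replace k with (q + (r - j))%nat by (unfold k, q; lia).
    rewrite <- (poch_INR_succ q (r - j)); field; apply INR_fact_neq_0. }
  assert (Hpoch_opp : poch (- INR r) j = (-1) ^ j * INR (fact r) / INR (fact (r - j))).
  { rewrite <- poch_opp_INR by lia; field; apply INR_fact_neq_0. }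
  assert (Hsign : (-1) ^ j * (-1) ^ j = 1).
  { rewrite <- Rpow_mult_distr, <- pow1 with j; f_equal; ring. }
  rewrite Hfalling, Hpoch, Hpoch_opp.
  replace (- (2 * c)) with (-1 * 2 * c) by ring.
  replace (1 + 1) with 2 by ring.
  unfold q; rewrite !Rpow_mult_distr, !pow_add.
  field_simplify; [| repeat split; apply INR_fact_neq_0 ..].
  replace (((-1) ^ j) ^ 2) with 1 by (rewrite <- Hsign; ring).
  unfold Rdiv; ring.
Qed.

Lemma exp_pow_INR r m : exp r ^ m = exp (INR m * r).
Proof.
  induction m as [|m IH]; [simpl; rewrite Rmult_0_l, exp_0; reflexivity|].
  rewrite S_INR; simpl; rewrite IH, <- exp_plus; f_equal; ring.
Qed.

(** * Taylor coefficients of G^n *)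

Lemma Gfun_factor kappa t z : z <> 0 -> z + 1 <> 0 ->
  Gfun kappa t z = (1 - kappa ^ 2 * (/ z) ^ 2) * / 4
    * ((z + 1) * exp (- (t * z / 2)) + (z - 1) * exp (t * z / 2)) ^ 2 * / (z + 1).
Proof.
  intros Hz0 Hz1; unfold Gfun, xi2.
  assert (Hhalf : exp (t * z) = exp (t * z / 2) * exp (t * z / 2))
    by (rewrite <- exp_plus; f_equal; field).
  assert (Hpos : exp (t * z / 2) > 0) by apply exp_pos.
  rewrite exp_Ropp, Hhalf, exp_Ropp; field; repeat split; lra.
Qed.

Definition exp_rate (n : nat) (t : R) (j : nat) : R := (INR (2 * n - j) - INR j) * (t / 2).

Definition gterm (n : nat) (kappa t : R) (j : nat) (z : R) : R :=
  (1 - kappa ^ 2 * (/ z) ^ 2) ^ n * (z + 1) ^ j * exp (exp_rate n t j * z) * (/ (z + 1)) ^ n.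

Lemma Gfun_pow_expansion n kappa t z : z <> 0 -> z + 1 <> 0 ->
  Gfun kappa t z ^ n = sumR (S (2 * n)) (fun j =>
    (/ 4) ^ n * C (2 * n) j * ((z - 1) ^ (2 * n - j) * gterm n kappa t j z)).
Proof.
  intros Hz0 Hz1; rewrite Gfun_factor by assumption.
  rewrite !Rpow_mult_distr, <- pow_mult, (Nat.mul_comm 2 n), binomial, sum_f_R0_sumR.
  rewrite (Nat.mul_comm n 2), <- sumR_mult_l, <- sumR_mult_r.
  apply sumR_ext; intros j _; unfold gterm, exp_rate.
  rewrite !Rpow_mult_distr, !exp_pow_INR.
  replace (exp ((INR (2 * n - j) - INR j) * (t / 2) * z)) with
    (exp (INR j * - (t * z / 2)) * exp (INR (2 * n - j) * (t * z / 2)))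
    by (rewrite <- exp_plus; f_equal; unfold Rdiv; ring).
  ring.
Qed.

Definition gterm_coef_prod (n : nat) (kappa t : R) (j : nat) : nat -> R :=
  cauchy (cauchy (cauchy (fun m => Pnm n m (kappa ^ 2)) (pow_coef 1 1 j))
                 (exp_coef 1 (exp_rate n t j)))
         (inv_pow_coef 1 1 n).

Definition gterm_coef_tail (n : nat) (kappa t : R) (k : nat) : nat -> R :=
  cauchy (fun m => Pnm n m (kappa ^ 2)) (cauchy (pow_coef 1 1 k) (exp_coef 1 (- (INR k * t)))).

(* Only the coefficients for [j > n] survive in [Gpow_coef] at order [n - 1]. *)
Definition gterm_coef (n : nat) (kappa t : R) (j : nat) : nat -> R :=
  if (n <? j)%nat then gterm_coef_tail n kappa t (j - n) else gterm_coef_prod n kappa t j.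

Lemma jet1_gterm_prod N n kappa t j : jet1 N (gterm n kappa t j) (gterm_coef_prod n kappa t j).
Proof.
  apply jet_mult; [apply jet_mult; [apply jet_mult|]|].
  - apply jet1_Pnm.
  - apply jet_pow.
  - apply jet_exp.
  - apply jet_inv_pow; intros x Hx; lra.
Qed.

Lemma jet1_gterm_tail N n kappa t k : (k <= n)%nat ->
  jet1 N (gterm n kappa t (n + k)) (gterm_coef_tail n kappa t k).
Proof.
  intros Hk.
  apply (jet_ext _ _ _ N (fun x => (1 - kappa ^ 2 * (/ x) ^ 2) ^ n *
                                   ((x + 1) ^ k * exp (- (INR k * t) * x)))).
  2:{ apply jet_mult; [apply jet1_Pnm | apply jet_mult; [apply jet_pow | apply jet_exp]]. }
  intros x Hx; unfold gterm, exp_rate.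
  replace ((INR (2 * n - (n + k)) - INR (n + k)) * (t / 2)) with (- (INR k * t))
    by (replace (2 * n - (n + k))%nat with (n - k)%nat by lia;
        rewrite minus_INR, plus_INR by lia; field).
  assert (Hcancel : (x + 1) ^ n * (/ (x + 1)) ^ n = 1)
    by (rewrite <- Rpow_mult_distr, Rinv_r, pow1; lra).
  rewrite pow_add.
  transitivity ((1 - kappa ^ 2 * (/ x) ^ 2) ^ n * ((x + 1) ^ k * exp (- (INR k * t) * x))
                * ((x + 1) ^ n * (/ (x + 1)) ^ n)); [rewrite Hcancel|]; ring.
Qed.

Lemma jet1_gterm N n kappa t j : (j <= 2 * n)%nat ->
  jet1 N (gterm n kappa t j) (gterm_coef n kappa t j).
Proof.
  intros Hj; unfold gterm_coef; destruct (Nat.ltb_spec n j).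
  - replace j with (n + (j - n))%nat at 1 by lia; apply jet1_gterm_tail; lia.
  - apply jet1_gterm_prod.
Qed.

Definition Gpow_coef (n : nat) (kappa t : R) (i : nat) : R :=
  sumR (S (2 * n)) (fun j =>
    (/ 4) ^ n * C (2 * n) j * cauchy (delta (2 * n - j)) (gterm_coef n kappa t j) i).

Lemma jet1_Gfun_pow N n kappa t : jet1 N (fun z => Gfun kappa t z ^ n) (Gpow_coef n kappa t).
Proof.
  apply (jet_ext _ _ _ N (fun z => sumR (S (2 * n)) (fun j =>
    (/ 4) ^ n * C (2 * n) j * ((z - 1) ^ (2 * n - j) * gterm n kappa t j z)))).
  { intros z Hz; symmetry; apply Gfun_pow_expansion; lra. }
  apply jet_sumR; intros j Hj; apply jet_scal, jet_mult.
  - apply jet_pow_centered.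
  - apply jet1_gterm; lia.
Qed.

Lemma Gpow_coef_pred n kappa t : (1 <= n)%nat ->
  Gpow_coef n kappa t (n - 1) =
  (/ 4) ^ n * sumR n (fun i => C (2 * n) (S n + i) * gterm_coef_tail n kappa t (S i) i).
Proof.
  intros Hn; unfold Gpow_coef; replace (S (2 * n)) with (S n + n)%nat by lia.
  rewrite sumR_add_range, sumR_eq0, Rplus_0_l, <- sumR_mult_l.
  - apply sumR_ext; intros i Hi; rewrite cauchy_delta_l.
    destruct (Nat.leb_spec (2 * n - (S n + i)) (n - 1)); [|lia].
    unfold gterm_coef; destruct (Nat.ltb_spec n (S n + i)); [|lia].
    replace (S n + i - n)%nat with (S i) by lia.
    replace (n - 1 - (2 * n - (S n + i)))%nat with i by lia; ring.
  - intros j Hj; rewrite cauchy_delta_l.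
    destruct (Nat.leb_spec (2 * n - j) (n - 1)); [lia | ring].
Qed.

Lemma gterm_coef_tail_laguerre n kappa t i :
  gterm_coef_tail n kappa t (S i) i = 2 * exp (- (INR (S i) * t)) *
    sumR (S i) (fun m => laguerre (S i - m - 1) (INR m + 1) (2 * INR (S i) * t) * 2 ^ m
                         * Pnm n m (kappa ^ 2)).
Proof.
  unfold gterm_coef_tail, cauchy at 1; rewrite <- sumR_mult_l; apply sumR_ext; intros m Hm.
  replace (S i) with (i - m + m + 1)%nat at 1 by lia.
  rewrite cauchy_pow_exp_laguerre.
  replace (S i - m - 1)%nat with (i - m)%nat by lia.
  replace (- (2 * - (INR (S i) * t))) with (2 * INR (S i) * t) by ring.
  rewrite pow_add; simpl (2 ^ 1); ring.
Qed.

Lemma Gpow_coef_an_formula n kappa t : (1 <= n)%nat ->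
  / INR (fact n) * (INR (fact (n - 1)) * Gpow_coef n kappa t (n - 1)) = an_formula n kappa t.
Proof.
  intros Hn; rewrite Gpow_coef_pred by assumption; unfold an_formula.
  rewrite (sumR_ext n _ (fun i => 2 * (C (2 * n) (n - S i) * exp (- (INR (S i) * t)) *
    sumR (S i) (fun m => laguerre (S i - m - 1) (INR m + 1) (2 * INR (S i) * t) * 2 ^ m
                         * Pnm n m (kappa ^ 2))))).
  2:{ intros i Hi; cbv beta zeta; rewrite gterm_coef_tail_laguerre, pascal_step1 by lia.
      replace (2 * n - (S n + i))%nat with (n - S i)%nat by lia; ring. }
  rewrite sumR_mult_l; destruct n as [|n]; [lia|].
  replace (S n - 1)%nat with n by lia.
  rewrite fact_simpl, mult_INR, pow_mult, pow_inv; replace (2 ^ 2) with 4 by ring.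
  field; repeat split;
    first [apply INR_fact_neq_0 | apply pow_nonzero; lra | apply not_0_INR; lia].
Qed.

Lemma phi_1 kappa t : phi kappa t 1 = 0.
Proof. unfold phi, alpha_inv, xi2; rewrite Rminus_diag; unfold Rdiv; ring. Qed.

Lemma derivable_pt_lim_phi_1 kappa t : kappa ^ 2 <> 1 ->
  derivable_pt_lim (phi kappa t) 1 (2 * exp t / (1 - kappa ^ 2)).
Proof.
  intros Hk; apply is_derive_Reals; unfold phi, alpha_inv, xi2.
  assert (Hk' : 1 * (1 * 1) + - (kappa * (kappa * 1)) <> 0)
    by (simpl in Hk; intros E; apply Hk; lra).
  assert (He : exp t > 0) by apply exp_pos.
  auto_derive.
  - rewrite Rplus_opp_r, !Rmult_0_l, Rplus_0_r; repeat split; auto; lra.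
  - rewrite Rplus_opp_r, !Rmult_0_l, !Rplus_0_r, !Rmult_1_r.
    field; intros E; apply Hk; lra.
Qed.

(* Where [z ^ 2 = kappa ^ 2] or [xi2 t z = -1] both sides are [0], by [/ 0 = 0]. *)
Lemma Gfun_eq_div_phi kappa t z : z <> 0 -> z + 1 <> 0 -> z <> 1 ->
  Gfun kappa t z = (z - 1) / phi kappa t z.
Proof.
  intros Hz0 Hz1 Hz.
  assert (Hexp : exp (t * z) > 0) by apply exp_pos.
  unfold Gfun, phi, alpha_inv; set (w := xi2 t z).
  destruct (Req_dec (z ^ 2 - kappa ^ 2) 0) as [Hk|Hk].
  { rewrite Hk; unfold Rdiv; rewrite Rinv_0, Rmult_0_r, !Rmult_0_l, Rinv_0; ring. }
  assert (Hw : w <> 0).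
  { unfold w, xi2, Rdiv; repeat apply Rmult_integral_contrapositive_currified;
      [lra | apply Rinv_neq_0_compat; exact Hz1 | lra]. }
  destruct (Req_dec (1 + w) 0) as [Hw1|Hw1].
  { rewrite Hw1; unfold Rdiv; rewrite pow_i, Rinv_0 by lia.
    rewrite !Rmult_0_r, Rinv_0; ring. }
  replace (z - 1) with (w * (z + 1) / exp (t * z)) by (unfold w, xi2; field; lra).
  rewrite exp_Ropp; field; repeat split; auto; lra.
Qed.

Theorem proposition3p1 (t kappa : R) (ht : 0 < t) (hk : -1 < kappa < 1) :
  phi kappa t 1 = 0 /\
  (exists l, l <> 0 /\ derivable_pt_lim (phi kappa t) 1 l) /\
  (exists d, 0 < d /\ forall z, 0 < Rabs (z - 1) < d ->
       Gfun kappa t z = (z - 1) / phi kappa t z) /\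
  (forall n : nat, (1 <= n)%nat ->
     exists d (h : R -> R), 0 < d /\
       is_Dn (n - 1) (1 - d) (1 + d) (fun z => (Gfun kappa t z) ^ n) h /\
       / INR (fact n) * h 1 = an_formula n kappa t).
Proof.
  assert (Hk : 0 < 1 - kappa ^ 2) by nra.
  split; [apply phi_1|]; split; [|split].
  - exists (2 * exp t / (1 - kappa ^ 2)); split; [|apply derivable_pt_lim_phi_1; lra].
    assert (exp t > 0) by apply exp_pos.
    apply Rgt_not_eq; unfold Rdiv; apply Rmult_gt_0_compat; [lra | apply Rinv_0_lt_compat, Hk].
  - exists (/ 2); split; [lra|]; intros z [Hz0 Hz].
    apply Rabs_def2 in Hz; apply Gfun_eq_div_phi; try lra.
    intros ->; rewrite Rminus_diag, Rabs_R0 in Hz0; lra.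
  - intros n Hn.
    destruct (jet_is_Dn _ _ _ _ _ _ (jet1_Gfun_pow (n - 1) n kappa t)) as (h & Hh & Hh1).
    exists (/ 2), h; split; [lra|]; split; [exact Hh|].
    rewrite Hh1; apply Gpow_coef_an_formula, Hn.
Qed.
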